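(* Let $u\in S$ and assume $\hat\sigma(u)>0$. Then there exists $\tau_0>0$ such that $\lambda(u+\tau\hat d(u))>\lambda(u)$ for all $\tau\in(0,\tau_0)$.
   Context: $T,G:\mathbb{R}^n\to\mathbb{R}^n$ are continuously differentiable; $S\subset\mathbb{R}^n$ is open with $\langle G(u),\psi\rangle>0$ for all $u\in S$ and all nonzero $\psi$ with nonnegative entries. For $u\in S$: $f_i(u)=T_i(u)/G_i(u)$, $\lambda(u)=\min_i f_i(u)$, $N(u)=\{i:f_i(u)=\lambda(u)\}=\{i_1<\dots<i_N\}$, $\mathcal{A}_{N(u)}(u)$ is the $n\times N$ matrix with columns $\nabla f_{i_1}(u),\dots,\nabla f_{i_N}(u)$. Let $\hat\alpha(u)$ be a minimizer of $\|\mathcal{A}_{N(u)}(u)\alpha\|^2$ over $\{\alpha\in\mathbb{R}^N:\alpha_k\ge0,\sum_k\alpha_k=1\}$, $\hat\sigma(u)=\|\mathcal{A}_{N(u)}(u)\hat\alpha(u)\|$, and, when $\hat\sigma(u)>0$, $\hat d(u)=\mathcal{A}_{N(u)}(u)\hat\alpha(u)/\|\mathcal{A}_{N(u)}(u)\hat\alpha(u)\|$. *)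

(* Points of R^n are column vectors 'cV[R]_n.+1
   (the dimension is n.+1 >= 1 so that lambda = min_i f_i is defined). *)
From HB Require Import structures.
From mathcomp Require Import all_boot all_order all_algebra.
From mathcomp Require Import all_classical all_reals all_analysis.
Set Implicit Arguments. Unset Strict Implicit. Unset Printing Implicit Defensive.
Import Order.TTheory GRing.Theory Num.Theory.
Import numFieldNormedType.Exports.
Local Open Scope classical_set_scope.
Local Open Scope ring_scope.

Section Defs.
Variables (R : realType) (n : nat).
Notation V := 'cV[R]_n.+1.

Definition ebasis (j : 'I_n.+1) : V := delta_mx j 0.

Definition C1map (F : V -> V) : Prop :=
  (forall x, differentiable F x) /\
  (forall (i j : 'I_n.+1),
      continuous (fun x => 'D_(ebasis j) (fun y => F y i 0) x)).

Definition dotv (x y : V) : R := \sum_(i < n.+1) x i 0 * y i 0.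
Definition enorm (m : nat) (x : 'cV[R]_m) : R :=
  Num.sqrt (\sum_(i < m) x i 0 ^+ 2).

Definition grad (h : V -> R) (u : V) : V :=
  \col_(j < n.+1) 'D_(ebasis j) h u.

Variables (T G : V -> V).

Definition fi (i : 'I_n.+1) (u : V) : R := T u i 0 / G u i 0.
Definition lam (u : V) : R := \big[Num.min/fi ord0 u]_(i < n.+1) fi i u.
Definition Nset (u : V) : {set 'I_n.+1} := [set i | fi i u == lam u].

(* the n x N matrix whose k-th column is grad f_{i_k}, i_1 < ... < i_N *)
Definition Amat (u : V) : 'M[R]_(n.+1, #|Nset u|) :=
  \matrix_(j < n.+1, k < #|Nset u|) grad (fi (enum_val k)) u j 0.

Definition simplex (m : nat) (a : 'cV[R]_m) : Prop :=
  (forall k, 0 <= a k 0) /\ \sum_(k < m) a k 0 = 1.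

Definition is_alpha_hat (u : V) (a : 'cV[R]_#|Nset u|) : Prop :=
  simplex a /\
  forall b : 'cV[R]_#|Nset u|, simplex b ->
    enorm (Amat u *m a) ^+ 2 <= enorm (Amat u *m b) ^+ 2.

Definition sigma_hat (u : V) (a : 'cV[R]_#|Nset u|) : R := enorm (Amat u *m a).
Definition d_hat (u : V) (a : 'cV[R]_#|Nset u|) : V :=
  (sigma_hat a)^-1 *: (Amat u *m a).
End Defs.

(* At an active index i (f_i u = lambda u), the optimality of alpha_hat over
   the simplex gives <A alpha, grad f_i u> >= ||A alpha||^2 = sigma^2 > 0, so
   the directional derivative of f_i along d_hat is positive and f_i increases
   strictly above lambda u for small tau > 0. Inactive indices satisfy
   f_i u > lambda u, which persists for small tau by continuity. Hence every
   f_i, and so their minimum, exceeds lambda u on some interval (0, tau0). *)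

From HB Require Import structures.
From mathcomp Require Import all_boot all_order all_algebra.
From mathcomp Require Import all_classical all_reals all_analysis.
From mathcomp Require Import ring lra.
Import Order.TTheory GRing.Theory Num.Theory.
Import numFieldNormedType.Exports.
Local Open Scope classical_set_scope.
Local Open Scope ring_scope.

Lemma enorm_sqr (R : realType) m (x : 'cV[R]_m) :
  enorm x ^+ 2 = \sum_(i < m) x i 0 ^+ 2.
Proof. by rewrite /enorm sqr_sqrtr // sumr_ge0 // => i _; rewrite sqr_ge0. Qed.

Lemma simplex_lerp_delta (R : realType) m (a : 'cV[R]_m) (k : 'I_m) (t : R) :
  simplex a -> 0 <= t <= 1 -> simplex ((1 - t) *: a + t *: delta_mx k 0).
Proof.
move=> [a_ge0 sum_a] /andP[t_ge0 t_le1]; split=> [l|].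
  by rewrite !mxE addr_ge0 ?mulr_ge0 ?subr_ge0.
rewrite (eq_bigr (fun l => (1 - t) * a l 0 + t * delta_mx k (0 : 'I_1) l 0));
  last by move=> l _; rewrite !mxE.
rewrite big_split /= -!mulr_sumr sum_a (bigD1 k) //= big1 ?mxE ?eqxx ?addr0.
  by rewrite /= !mulr1 subrK.
by move=> l /negbTE lk; rewrite mxE lk.
Qed.

Lemma affine_ge0_near0_ge0 (R : realFieldType) (a b : R) :
  (forall t, 0 < t <= 1 -> 0 <= a + t * b) -> 0 <= a.
Proof.
move=> affine_ge0; rewrite leNgt; apply/negP => a_lt0.
have den_gt0 : 0 < `|b| - a by rewrite subr_gt0 (lt_le_trans a_lt0).
pose t := - a / (`|b| - a).
have t_gt0 : 0 < t by rewrite divr_gt0 // oppr_gt0.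
have t_den : t * (`|b| - a) = - a by rewrite divfK // gt_eqF.
have t_le1 : t <= 1 by rewrite -(ler_pM2r den_gt0) mul1r t_den lerDr normr_ge0.
have tb_le : t * b <= t * `|b| by rewrite ler_pM2l // ler_norm.
have ta_lt0 : t * a < 0 by rewrite pmulr_rlt0.
have := affine_ge0 t; rewrite t_gt0 t_le1 => /(_ isT).
have : t * `|b| = - a + t * a by rewrite -t_den mulrBr; ring.
lra.
Qed.

(* Moving from a towards the vertex e_k stays in the simplex, so the slope of
   ||A b||^2 at a along this segment is nonnegative. *)
Lemma simplex_argmin_le (R : realType) m p (A : 'M[R]_(m, p)) (a : 'cV[R]_p)
  (k : 'I_p) :
  simplex a ->
  (forall b, simplex b -> enorm (A *m a) ^+ 2 <= enorm (A *m b) ^+ 2) ->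
  enorm (A *m a) ^+ 2 <= \sum_(j < m) (A *m a) j 0 * A j k.
Proof.
move=> sa amin; set w := A *m a.
pose z j := A j k - w j 0.
pose P := \sum_(j < m) w j 0 * z j.
pose Q := \sum_(j < m) z j ^+ 2.
have expand t : enorm (A *m ((1 - t) *: a + t *: delta_mx k 0)) ^+ 2
    - enorm w ^+ 2 = t * (2 * P + t * Q).
  rewrite mulmxDr -!scalemxAr -colE !enorm_sqr -sumrB.
  rewrite /P /Q mulr_sumr mulrDr !mulr_sumr -big_split /=.
  by apply: eq_bigr => j _; rewrite /z !mxE; ring.
have twoP_ge0 : 0 <= 2 * P.
  apply: (@affine_ge0_near0_ge0 _ _ Q) => t /andP[t_gt0 t_le1].
  rewrite -(pmulr_rge0 _ t_gt0) -expand subr_ge0.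
  by apply/amin/simplex_lerp_delta => //; rewrite ltW.
rewrite enorm_sqr -subr_ge0.
have -> : \sum_(j < m) w j 0 * A j k - \sum_(j < m) w j 0 ^+ 2 = P.
  by rewrite -sumrB; apply: eq_bigr => j _; rewrite /z; ring.
by rewrite -(pmulr_rge0 _ (ltr0Sn _ 1)).
Qed.
Arguments simplex_argmin_le {R m p A a}.

Section RightOfZero.
Context {R : realType} {V : normedModType R}.

Lemma near_right0P {P : R -> Prop} :
  (\forall t \near 0^'+, P t) ->
  exists e : R, 0 < e /\ forall t, 0 < t < e -> P t.
Proof.
rewrite near_withinE => /nbhs_ballP[e e_gt0 Pe].
exists e; split=> // t /andP[t_gt0 t_lt_e]; apply: Pe => //.
by rewrite -ball_normE /= sub0r normrN gtr0_norm.
Qed.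

Lemma derive_gt0_near_right (f : V -> R) (a v : V) :
  derivable f a v -> 0 < 'D_v f a ->
  \forall t \near 0^'+, f a < f (t *: v + a).
Proof.
move=> df Df_gt0.
apply: filterS2 (nbhs_right_gt 0) (cvgr_gt _ (cvg_dnbhs_at_right df) 0 Df_gt0)
  => t t_gt0 /=.
by rewrite -[_ *: _]/(_ * _) pmulr_rgt0 ?invr_gt0 // subr_gt0.
Qed.

Lemma differentiable_near_right (f : V -> R) (a v : V) (c : R) :
  differentiable f a -> c < f a ->
  \forall t \near 0^'+, c < f (t *: v + a).
Proof.
move=> df c_lt.
have line_cont : {for 0, continuous (fun h : R => f (h *: v + a))}.
  apply: differentiable_continuous.
  apply: (@differentiable_comp _ _ _ _ (fun h : R => h *: v + a) f).
    by apply: differentiableD => //; exact: differentiableZl.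
  by rewrite /= scale0r add0r.
move: line_cont; rewrite /prop_for /continuous_at scale0r add0r => line_cont.
exact: cvgr_gt _ (cvg_within_filter _ line_cont) c c_lt.
Qed.

End RightOfZero.

Section Gradient.
Context {R : realType} {n : nat}.
Notation V := 'cV[R]_n.+1.

Lemma dotv_delta (x : V) (i : 'I_n.+1) : dotv x (delta_mx i 0) = x i 0.
Proof.
rewrite /dotv (bigD1 i) //= big1 ?mxE ?eqxx ?mulr1 ?addr0 //.
by move=> j /negbTE ji; rewrite mxE ji mulr0.
Qed.

Lemma coord_gt0_of_dotv_gt0 (x : V) (i : 'I_n.+1) :
  (forall psi : V, (forall j, 0 <= psi j 0) -> psi != 0 -> 0 < dotv x psi) ->
  0 < x i 0.
Proof.
move=> x_pos; rewrite -dotv_delta; apply: x_pos => [j|].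
  by rewrite mxE ler0n.
apply/negP => /eqP /matrixP /(_ i 0); rewrite !mxE !eqxx /=.
by apply/eqP; exact: oner_neq0.
Qed.

Lemma derive_dotv_grad (f : V -> R) (u v : V) :
  differentiable f u -> 'D_v f u = dotv (grad f u) v.
Proof.
move=> df; rewrite deriveE // {1}(matrix_sum_delta v) linear_sum /=.
apply: eq_bigr => j _; rewrite big_ord1 linearZ /= mxE deriveE //.
by rewrite /ebasis mulrC.
Qed.

End Gradient.

Section ActiveIndices.
Context {R : realType} {n : nat} {T G : 'cV[R]_n.+1 -> 'cV[R]_n.+1}.
Notation V := 'cV[R]_n.+1.

Lemma lam_le_fi (i : 'I_n.+1) (v : V) : lam T G v <= fi T G i v.
Proof. by rewrite /lam (bigD1 i) //= ge_min lexx. Qed.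

Lemma lt_lam (c : R) (v : V) :
  (forall i, c < fi T G i v) -> c < lam T G v.
Proof.
move=> c_lt; rewrite /lam.
by apply: (big_ind (fun x => c < x)) => // x y cx cy; rewrite lt_min cx cy.
Qed.

Lemma Nset_fi {u : V} {i : 'I_n.+1} : i \in Nset T G u -> fi T G i u = lam T G u.
Proof. by rewrite inE => /eqP. Qed.

Lemma notin_Nset_lt {u : V} {i : 'I_n.+1} :
  i \notin Nset T G u -> lam T G u < fi T G i u.
Proof. by rewrite inE lt_neqAle lam_le_fi andbT eq_sym. Qed.

Lemma differentiable_fi (u : V) (i : 'I_n.+1) :
  differentiable T u -> differentiable G u -> G u i 0 != 0 ->
  differentiable (fi T G i) u.
Proof.
move=> dT dG Gi_neq0.
have -> : fi T G i = (fun y => T y i 0) * (fun y => (G y i 0)^-1) by [].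
apply: differentiableM.
  exact: differentiable_comp dT (differentiable_coord _ i 0).
apply: differentiableV => //.
exact: differentiable_comp dG (differentiable_coord _ i 0).
Qed.

Lemma Amat_enum_rank (u : V) (i : 'I_n.+1) (iN : i \in Nset T G u) j :
  Amat T G u j (enum_rank_in iN i) = grad (fi T G i) u j 0.
Proof. by rewrite mxE enum_rankK_in. Qed.

Lemma derive_d_hat_gt0 (u : V) (alpha : 'cV[R]_#|Nset T G u|) (i : 'I_n.+1) :
  is_alpha_hat alpha -> 0 < sigma_hat alpha ->
  differentiable (fi T G i) u -> i \in Nset T G u ->
  0 < 'D_(d_hat alpha) (fi T G i) u.
Proof.
move=> [alpha_simplex alpha_min] sigma_gt0 dfi iN.
have opt := simplex_argmin_le (enum_rank_in iN i) alpha_simplex alpha_min.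
have -> : 'D_(d_hat alpha) (fi T G i) u = (sigma_hat alpha)^-1 *
    \sum_j (Amat T G u *m alpha) j 0 * Amat T G u j (enum_rank_in iN i).
  rewrite derive_dotv_grad // /dotv mulr_sumr; apply: eq_bigr => j _.
  by rewrite Amat_enum_rank /d_hat [X in _ * X = _]mxE; ring.
apply: mulr_gt0; first by rewrite invr_gt0.
apply: lt_le_trans opt.
by rewrite exprn_gt0.
Qed.

End ActiveIndices.

Theorem corollary3 (R : realType) (n : nat) (T G : 'cV[R]_n.+1 -> 'cV[R]_n.+1)
  (S : set 'cV[R]_n.+1)
  (hT : C1map T) (hG : C1map G) (hS : open S)
  (hpos : forall u, S u -> forall psi : 'cV[R]_n.+1,
            (forall i, 0 <= psi i 0) -> psi != 0 -> 0 < dotv (G u) psi)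
  (u : 'cV[R]_n.+1) (hu : S u)
  (alpha : 'cV[R]_#|Nset T G u|) (halpha : is_alpha_hat alpha)
  (hsig : 0 < sigma_hat alpha) :
  exists tau0 : R, 0 < tau0 /\
    forall tau : R, 0 < tau < tau0 ->
      lam T G u < lam T G (u + tau *: d_hat alpha).
Proof.
have dfi i : differentiable (fi T G i) u.
  apply: differentiable_fi (hT.1 u) (hG.1 u) _.
  by rewrite gt_eqF //; apply: coord_gt0_of_dotv_gt0; exact: hpos.
have near_all i : \forall t \near 0^'+,
    lam T G u < fi T G i (t *: d_hat alpha + u).
  have [iN|iN] := boolP (i \in Nset T G u).
    rewrite -(Nset_fi iN); apply: derive_gt0_near_right.
      exact: diff_derivable.
    exact: derive_d_hat_gt0.
  exact: differentiable_near_right (notin_Nset_lt iN).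
have [tau0 [tau0_gt0 near_tau]] := near_right0P (filter_forall _ near_all).
exists tau0; split=> // tau /near_tau lt_fi.
by apply: lt_lam => i; rewrite addrC.
Qed.
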